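(* Let $q$ be a fixed rational number. Then the set of programs $\{M\mid ME[U](M)>q\}$ is a $(\lfloor 2^q\rfloor+1)$-observable hyperproperty.
   Context: Stores map variables to values; $H$ is the high input variable and $O$ the low output variable. A trace is a sequence of stores. For a finite trace $t$, $t\circ t'$ is concatenation. A program is a set $M$ of infinite traces that is deterministic (two traces with the same initial value of $H$ are equal) and has a finite nonempty input domain $\mathbb{H}_M=\{\sigma_0(H)\}$. Input domains are unbounded in size. $M(h)$ is the output trace $(\sigma_1(O),\sigma_2(O),\dots)$ of the trace of $M$ starting with $H=h$. $\bot$ denotes termination. $M(h)=o$ means that for all $i$, $o_i=\bot$ or $M(h)_i=\bot$ or $M(h)_i=o_i$. For a distribution $\mu$ on $\mathbb{H}_M$, $\mu(O=o)=\sum_{h:M(h)=o}\mu(H=h)$, with conditional probabilities induced accordingly. $U$ is the uniform distribution on $\mathbb{H}_M$. Min-entropy QIF (log base 2): $\mathcal{V}[\mu](X)=\max_x\mu(X=x)$, $\mathcal{V}[\mu](X|Y)=\sum_y\mu(Y=y)\max_x\mu(X=x|Y=y)$, and $ME[\mu](M)=\log\frac1{\mathcal{V}[\mu](H)}-\log\frac1{\mathcal{V}[\mu](H|O)}$. $\mathit{Prop}$ is the set of programs; $\mathit{Obs}$ is the set of deterministic finite sets of finite traces. For $S\in\mathit{Obs}$ and $T\in\mathit{Prop}$, $S\le T$ iff every $t\in S$ has some $t'$ with $t\circ t'\in T$. $P\subseteq\mathit{Prop}$ is $k$-observable iff for every $S\in P$ there is $T\in\mathit{Obs}$ with $T\le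 S$ and $|T|\le k$ such that every $S'\in\mathit{Prop}$ with $T\le S'$ is in $P$. *)

From HB Require Import structures.
From mathcomp Require Import all_boot all_order all_algebra.
From mathcomp Require Import finmap boolp classical_sets functions cardinality fsbigop reals exp.
Set Implicit Arguments. Unset Strict Implicit. Unset Printing Implicit Defensive.
Import Order.TTheory GRing.Theory Num.Theory.
Local Open Scope classical_set_scope.
Local Open Scope ring_scope.

Section QIF.
Context (R : realType) (Var : Type) (Val : choiceType).
(* H : high input variable, O : low output variable, bot : the value denoting termination *)
Context (H O : Var) (bot : Val).

Definition store := Var -> Val.
Definition trace := nat -> store.
Definition ftrace := seq store.

Definition tcat (t : ftrace) (t' : trace) : trace :=
  fun i => if (i < size t)%N then nth (t' 0%N) t i else t' (i - size t)%N.

Definition deterministic (M : set trace) : Prop :=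
  forall s s', M s -> M s' -> s 0%N H = s' 0%N H -> s = s'.

Definition inputs (M : set trace) : set Val := [set s 0%N H | s in M].

Definition is_program (M : set trace) : Prop :=
  [/\ deterministic M, finite_set (inputs M) & inputs M !=set0].

Definition fdeterministic (S : set ftrace) : Prop :=
  forall x y t t', S (x :: t) -> S (y :: t') -> x H = y H -> x :: t = y :: t'.

Definition is_obs (S : set ftrace) : Prop := finite_set S /\ fdeterministic S.

Definition obs_le (S : set ftrace) (T : set trace) : Prop :=
  forall t, S t -> exists t', T (tcat t t').

Definition k_observable (k : nat) (P : set (set trace)) : Prop :=
  forall S, P S -> exists T : set ftrace,
    [/\ is_obs T, obs_le T S, (#|` fset_set T | <= k)%N &
        forall S', is_program S' -> obs_le T S' -> P S'].

Definition out (M : set trace) (h : Val) : nat -> Val :=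
  let s := xget (fun _ _ => bot) [set s | M s /\ s 0%N H = h] in
  fun i => s i.+1 O.

(* "M(h) = o" *)
Definition out_match (a o : nat -> Val) : Prop :=
  forall i, o i = bot \/ a i = bot \/ a i = o i.

Definition outputs (M : set trace) : set (nat -> Val) := [set out M h | h in inputs M].

Definition uniform (M : set trace) : Val -> R := fun _ => (#|` fset_set (inputs M) |%:R)^-1.

Definition prHO (mu : Val -> R) M h o : R :=
  if `[< out_match (out M h) o >] then mu h else 0.
Definition prO (mu : Val -> R) M o : R := \sum_(h \in inputs M) prHO mu M h o.

Definition VH (mu : Val -> R) M : R := \big[Num.max/0]_(h \in inputs M) mu h.
Definition VHO (mu : Val -> R) M : R :=
  \sum_(o \in outputs M)
     prO mu M o * \big[Num.max/0]_(h \in inputs M) (prHO mu M h o / prO mu M o).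

Definition log2 (x : R) : R := ln x / ln 2.

Definition ME (mu : Val -> R) M : R :=
  log2 (VH mu M)^-1 - log2 (VHO mu M)^-1.

End QIF.

From HB Require Import structures.
From mathcomp Require Import all_boot all_order all_algebra.
From mathcomp Require Import finmap boolp classical_sets functions cardinality fsbigop reals exp.
From mathcomp Require Import ring.
Import Order.TTheory GRing.Theory Num.Theory.
Local Open Scope classical_set_scope.
Local Open Scope ring_scope.

Set Implicit Arguments.
Unset Strict Implicit.
Unset Printing Implicit Defensive.

(* Under the uniform prior every output o collects the mass 1/n of the inputs
   producing it, so [VHO] is (number of outputs)/n and [ME] is the log2 of the
   number of distinct outputs; [ME > q] thus means "at least floor(2^q) + 1
   distinct outputs".  Such outputs are witnessed by finitely many traces, and
   any two of them already differ before some common position N; their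
   prefixes of length N + 1 form the observation, since every program
   extending them reproduces those outputs up to N, hence as many distinct
   outputs. *)

Lemma bigmax_zero_or_const (R : realDomainType) (T : eqType) (r : seq T)
    (F : T -> R) (c : R) :
  0 <= c -> (forall i, F i = 0 \/ F i = c) -> (exists2 i, i \in r & F i = c) ->
  \big[Num.max/0]_(i <- r) F i = c.
Proof.
move=> c_ge0 F0c [j jr Fj].
apply/eqP; rewrite eq_le; apply/andP; split.
  elim: r {jr} => [|x r IH]; first by rewrite big_nil.
  by rewrite big_cons ge_max IH andbT; case: (F0c x) => ->.
elim: r jr => [//|x r IH]; rewrite in_cons big_cons le_max => /orP[/eqP<-|/IH->];
  by rewrite ?Fj ?lexx ?orbT.
Qed.

Lemma lt_log2_nat (R : realType) (x : R) (m : nat) : (0 < m)%N ->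
  x < log2 (m%:R : R) <-> (`|Num.floor (powR 2 x)|.+1 <= m)%N.
Proof.
move=> m_gt0.
have ln2_gt0 : 0 < ln (2 : R) by rewrite ln_gt0 // ltr1n.
rewrite /log2 ltr_pdivlMr // -ln_powR ltr_ln ?posrE ?powR_gt0 ?ltr0n //.
have floor_ge0 : 0 <= Num.floor (powR (2 : R) x).
  by rewrite leNgt floor_lt0 -leNgt powR_ge0.
by rewrite -[m%:R]/((m%:Z)%:~R) -floor_lt_int -{1}(gez0_abs floor_ge0) ltz_nat.
Qed.

Lemma uniq_map_inj_in (T1 T2 : eqType) (f : T1 -> T2) (s : seq T1) :
  uniq (map f s) -> {in s &, injective f}.
Proof.
elim: s => //= x s IH /andP[fx_notin uniq_fs] y z.
rewrite !in_cons => /orP[/eqP-> | ys] /orP[/eqP-> | zs] //.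
- by move=> fxz; rewrite fxz map_f in fx_notin.
- by move=> fyx; rewrite -fyx map_f in fx_notin.
- exact: IH.
Qed.

Lemma ex_map_preimage (aT rT : eqType) (f : aT -> rT) (A : set aT) (os : seq rT) :
  (forall o, o \in os -> (f @` A) o) ->
  exists2 xs : seq aT, (forall x, x \in xs -> A x) & map f xs = os.
Proof.
elim: os => [|o os IH] osA; first by exists [::].
have [x Ax fx] := osA o (mem_head _ _).
have [xs xsA <-] : exists2 xs : seq aT, (forall x, x \in xs -> A x) & map f xs = os.
  by apply: IH => o' o'os; apply: osA; rewrite in_cons o'os orbT.
by exists (x :: xs) => [y | /=]; [rewrite in_cons => /orP[/eqP-> | /xsA] | rewrite fx].
Qed.

Lemma ex_common_bound (T : eqType) (s : seq T) (P : nat -> T -> Prop) :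
  (forall N N' x, (N <= N')%N -> P N x -> P N' x) ->
  (forall x, x \in s -> exists N, P N x) -> exists N, forall x, x \in s -> P N x.
Proof.
move=> P_mono; elim: s => [|x s IH] s_bounded; first by exists 0%N.
have [N1 PN1] := s_bounded x (mem_head _ _).
have [N2 PN2] : exists N, forall y, y \in s -> P N y.
  by apply: IH => y ys; apply: s_bounded; rewrite in_cons ys orbT.
exists (maxn N1 N2) => y; rewrite in_cons => /orP[/eqP-> | ys].
  exact: P_mono (leq_maxl _ _) PN1.
exact: P_mono (leq_maxr _ _) (PN2 _ ys).
Qed.

Lemma ex_separating_length (T : choiceType) (fs : seq (nat -> T)) :
  exists N, {in fs &, forall f g, (forall j, (j < N)%N -> f j = g j) -> f = g}.
Proof.
have mono (f g : nat -> T) N N' : (N <= N')%N ->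
    ((forall j, (j < N)%N -> f j = g j) -> f = g) ->
    (forall j, (j < N')%N -> f j = g j) -> f = g.
  by move=> NN' sepN agree; apply: sepN => j jN; apply: agree (leq_trans jN NN').
suff [N sepN] : exists N, forall f, f \in fs -> forall g, g \in fs ->
    (forall j, (j < N)%N -> f j = g j) -> f = g.
  by exists N => f g ffs gfs; apply: sepN.
apply: ex_common_bound => [N N' f NN' sepN g gfs | f _].
  exact: mono NN' (sepN g gfs).
apply: ex_common_bound => [N N' g | g _]; first exact: mono.
have [-> | fg] := pselect (f = g); first by exists 0%N.
have [j fgj] : exists j, f j <> g j by apply/existsNP => fg_eq; apply/fg/funext.
by exists j.+1 => agree; case: fgj; apply: agree.
Qed.

Definition trace_out (Var : Type) (Val : choiceType) (O : Var)
    (s : trace Var Val) : nat -> Val :=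
  fun i => s i.+1 O.

Definition num_outputs (Var : Type) (Val : choiceType) (H O : Var) (bot : Val)
    (M : set (trace Var Val)) : nat :=
  #|` fset_set (outputs H O bot M)|.

Section UniformLeakage.
Variables (R : realType) (Var : Type) (Val : choiceType) (H O : Var) (bot : Val).
Variable M : set (trace Var Val).
Hypothesis M_program : is_program H M.

Lemma out_trace s : M s -> out H O bot M (s 0%N H) = trace_out O s.
Proof.
move=> Ms; rewrite /out.
have ex : exists x, [set s' | M s' /\ s' 0%N H = s 0%N H] x by exists s.
have [Mx xH] := xgetPex (fun _ _ => bot) ex.
by case: M_program => det _ _; rewrite (det _ _ Mx Ms xH).
Qed.

Lemma outputsE : outputs H O bot M = trace_out O @` M.
Proof.
apply/seteqP; split => o.
  by case=> _ [s Ms <-] <-; exists s; rewrite ?out_trace.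
by case=> s Ms <-; exists (s 0%N H); [exists s | rewrite out_trace].
Qed.

Let finite_inputs : finite_set (inputs H M).
Proof. by case: M_program. Qed.

Lemma finite_outputs : finite_set (outputs H O bot M).
Proof. exact: finite_image. Qed.

Let n := #|` fset_set (inputs H M)|.
Let mu := uniform R H M.

Let n_gt0 : (0 < n)%N.
Proof.
case: M_program => _ _ [h hM]; rewrite /n cardfs_gt0; apply/negP => /eqP I0.
by have := in_fset_set finite_inputs h; rewrite I0 inE mem_set.
Qed.

Let invn_gt0 : 0 < (n%:R : R)^-1.
Proof. by rewrite invr_gt0 ltr0n. Qed.

Lemma num_outputs_gt0 : (0 < num_outputs H O bot M)%N.
Proof.
case: M_program => _ _ [h hM]; rewrite cardfs_gt0; apply/negP => /eqP O0.
have := in_fset_set finite_outputs (out H O bot M h).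
by rewrite O0 inE mem_set //; exists h.
Qed.

Lemma VH_uniform : VH H mu M = (n%:R)^-1.
Proof.
rewrite /VH; apply: bigmax_zero_or_const; [exact: ltW | by right |].
case: M_program => _ _ [h hM]; exists h => //.
rewrite in_finite_support; last exact: finite_setIl.
by apply: mem_set; split => //=; apply/eqP; rewrite gt_eqF.
Qed.

Let prHO_zero_or_const h o : prHO H O bot mu M h o = 0 \/ prHO H O bot mu M h o = (n%:R)^-1.
Proof. by rewrite /prHO; case: ifP => _; [right | left]. Qed.

Let prHO_out h : prHO H O bot mu M h (out H O bot M h) = (n%:R)^-1.
Proof. by rewrite /prHO asboolT // => i; right; right. Qed.

Let prO_out_ge h : inputs H M h -> (n%:R)^-1 <= prO H O bot mu M (out H O bot M h).
Proof.
move=> hM; rewrite /prO fsbig_finite //.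
rewrite (bigD1_seq h) ?fset_uniq ?in_fset_set ?mem_set //= prHO_out lerDl.
apply: sumr_ge0 => i _.
by case: (prHO_zero_or_const i (out H O bot M h)) => -> //; apply: ltW.
Qed.

(* The posterior vulnerability contributed by each output is the mass 1/n of
   its most likely input, whatever the probability of the output itself. *)
Let VHO_term o : outputs H O bot M o ->
  prO H O bot mu M o *
    \big[Num.max/0]_(h \in inputs H M) (prHO H O bot mu M h o / prO H O bot mu M o)
  = (n%:R)^-1.
Proof.
case=> h hM <-; set p := prO _ _ _ _ _ _.
have p_gt0 : 0 < p by apply: lt_le_trans (prO_out_ge hM).
rewrite (@bigmax_zero_or_const _ _ _ _ ((n%:R)^-1 / p)).
- by rewrite mulrCA divff ?mulr1 ?gt_eqF.
- by rewrite divr_ge0 ?ltW.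
- by move=> i; case: (prHO_zero_or_const i (out H O bot M h)) => ->;
    [left; rewrite mul0r | right].
exists h; last by rewrite prHO_out.
rewrite in_finite_support; last exact: finite_setIl.
by apply: mem_set; split => //=; apply/eqP; rewrite prHO_out gt_eqF ?divr_gt0.
Qed.

Lemma VHO_uniform : VHO H O bot mu M = (n%:R)^-1 *+ num_outputs H O bot M.
Proof.
rewrite /VHO fsbig_finite; last exact: finite_outputs.
rewrite (eq_big_seq (fun _ => (n%:R)^-1)); last first.
  by move=> o; rewrite in_fset_set ?inE; [exact: VHO_term | exact: finite_outputs].
by rewrite big_const_seq count_predT iter_addr_0.
Qed.

Lemma ME_uniform : ME H O bot mu M = log2 ((num_outputs H O bot M)%:R : R).
Proof.
set m := num_outputs H O bot M.
have n_pos : (0 : R) < n%:R by rewrite ltr0n.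
have m_pos : (0 : R) < m%:R by rewrite ltr0n num_outputs_gt0.
rewrite /ME VH_uniform VHO_uniform invrK.
have -> : ((n%:R : R)^-1 *+ m)^-1 = n%:R / m%:R.
  by rewrite -(mulr_natr (n%:R^-1)) invfM invrK.
rewrite /log2 -mulrBl lnM ?posrE ?invr_gt0 // lnV ?posrE //.
by congr (_ / _); ring.
Qed.

Lemma ex_traces_distinct_outputs k : (k <= num_outputs H O bot M)%N ->
  exists ts : seq (trace Var Val),
    [/\ size ts = k, forall s, s \in ts -> M s & uniq (map (trace_out O) ts)].
Proof.
move=> k_le; set os := take k (fset_set (outputs H O bot M)).
have [ts tsM tsE] : exists2 ts, (forall s, s \in ts -> M s) & map (trace_out O) ts = os.
  apply: ex_map_preimage => o /mem_take.
  by rewrite -outputsE in_fset_set ?inE //; exact: finite_outputs.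
exists ts; split => //; last by rewrite tsE take_uniq ?fset_uniq.
by rewrite -(size_map (trace_out O)) tsE size_takel.
Qed.

End UniformLeakage.

Section PrefixObservation.
Variables (Var : Type) (Val : choiceType) (H O : Var) (bot : Val).

Lemma tcat_mkseq (s : trace Var Val) n : tcat (mkseq s n) (fun i => s (i + n)%N) = s.
Proof.
by apply: funext => i; rewrite /tcat size_mkseq; case: ltnP => iN;
  rewrite ?nth_mkseq ?subnK.
Qed.

Lemma tcat_mkseq_lt (s t : trace Var Val) n i : (i < n)%N -> tcat (mkseq s n) t i = s i.
Proof. by move=> iN; rewrite /tcat size_mkseq iN (nth_map 0%N) ?size_iota ?nth_iota. Qed.

Definition prefixes (ts : seq (trace Var Val)) (N : nat) : {fset ftrace Var Val} :=
  [fset mkseq s N.+1 | s : trace Var Val in ts]%fset.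

Variables (ts : seq (trace Var Val)) (N : nat).

Lemma card_prefixes : (#|` fset_set [set` prefixes ts N]| <= size ts)%N.
Proof.
rewrite set_fsetK; apply: leq_trans (leq_imfset_card _ _ _) _.
by apply: uniq_leq_size (enum_finmem_uniq _) _ => x; rewrite enum_finmemE.
Qed.

Lemma prefixes_le (M : set (trace Var Val)) :
  (forall s, s \in ts -> M s) -> obs_le [set` prefixes ts N] M.
Proof.
move=> tsM _ /imfsetP[s sts ->]; exists (fun i => s (i + N.+1)%N).
by rewrite tcat_mkseq; apply: tsM.
Qed.

Lemma prefixes_obs (M : set (trace Var Val)) :
  deterministic H M -> (forall s, s \in ts -> M s) -> is_obs H [set` prefixes ts N].
Proof.
move=> detM tsM; split; first exact: finite_fset.
move=> x y t t' /imfsetP[s sts es] /imfsetP[s' s'ts es'] xy.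
have [xs ys] : x = s 0%N /\ y = s' 0%N.
  by move: es es'; rewrite /mkseq /= => -[-> _] [-> _].
rewrite es es'; congr mkseq.
by apply: detM; [exact: tsM | exact: tsM | rewrite -xs -ys].
Qed.

(* On the inputs of [ts], S produces outputs agreeing with those of [ts] below
   N, and N separates the latter. *)
Lemma num_outputs_extending (S : set (trace Var Val)) :
  is_program H S -> obs_le [set` prefixes ts N] S ->
  uniq (map (trace_out O) ts) ->
  {in map (trace_out O) ts &, forall f g, (forall j, (j < N)%N -> f j = g j) -> f = g} ->
  (size ts <= num_outputs H O bot S)%N.
Proof.
move=> S_program leS uniq_out sepN.
pose g s := out H O bot S (s 0%N H).
have g_prefix s : s \in ts ->
    outputs H O bot S (g s) /\ forall j, (j < N)%N -> g s j = trace_out O s j.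
  move=> sts; have [t St] : exists t, S (tcat (mkseq s N.+1) t).
    by apply: leS; apply/imfsetP; exists s.
  have u_pre i : (i < N.+1)%N -> tcat (mkseq s N.+1) t i = s i by apply: tcat_mkseq_lt.
  have -> : g s = trace_out O (tcat (mkseq s N.+1) t).
    by rewrite /g -u_pre // out_trace.
  split; first by rewrite outputsE //; exists (tcat (mkseq s N.+1) t).
  by move=> j jN; rewrite /trace_out u_pre.
have g_inj : {in ts &, injective g}.
  move=> s1 s2 s1ts s2ts g12; apply: (uniq_map_inj_in uniq_out) => //.
  apply: sepN; rewrite ?map_f // => j jN.
  by rewrite -(g_prefix s1 s1ts).2 // -(g_prefix s2 s2ts).2 // g12.
rewrite -(size_map g); apply: uniq_leq_size.
  by rewrite map_inj_in_uniq // (map_uniq uniq_out).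
move=> _ /mapP[s sts ->]; rewrite in_fset_set ?inE; first exact: (g_prefix s sts).1.
exact: finite_outputs.
Qed.

End PrefixObservation.

Theorem theorem10 (R : realType) (Var : Type) (Val : choiceType)
    (H O : Var) (bot : Val) (q : rat) :
  k_observable H (`|Num.floor (powR (2 : R) (ratr q))|%N).+1
    [set M | is_program H M /\ ME H O bot (uniform R H M) M > ratr q].
Proof.
set k := (`|Num.floor _|%N).+1.
have leaks_iff M : is_program H M ->
    ME H O bot (uniform R H M) M > ratr q <-> (k <= num_outputs H O bot M)%N.
  by move=> M_program; rewrite ME_uniform //; apply: lt_log2_nat; apply: num_outputs_gt0.
move=> M [M_program /(leaks_iff _ M_program) k_le].
have [ts [ts_size tsM uniq_out]] := ex_traces_distinct_outputs M_program k_le.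
have [N sepN] := ex_separating_length (map (trace_out O) ts).
exists [set` prefixes ts N]; split.
- by apply: prefixes_obs tsM; case: M_program.
- exact: prefixes_le.
- by rewrite -ts_size card_prefixes.
- move=> S S_program leS; split => //; apply/leaks_iff => //.
  by rewrite -ts_size (num_outputs_extending bot S_program leS).
Qed.
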